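(* Let $\kappa$ be a cardinal, $\mathbb{F}$ a field, and $V$ the vector space over $\mathbb{F}$ presented by generators $x_\alpha,y_\alpha,z_\alpha$ ($\alpha\in\kappa$) and relations $x_\alpha+y_\alpha+z_\alpha=0$. Let $F\colon\mathcal{P}(\kappa)^3\to\mathrm{Sub}(V)$, $F(A,B,C)=\mathrm{Span}\{x_\alpha:\alpha\in A\}+\mathrm{Span}\{y_\beta:\beta\in B\}+\mathrm{Span}\{z_\gamma:\gamma\in C\}$, and $G\colon\mathrm{Sub}(V)\to\mathcal{P}(\kappa)^3$, $G(W)=(\{\alpha:x_\alpha\in W\},\{\beta:y_\beta\in W\},\{\gamma:z_\gamma\in W\})$. Then for all $(A,B,C)\in\mathcal{P}(\kappa)^3$, $G(F(A,B,C))=(A\cup(B\cap C),\ B\cup(A\cap C),\ C\cup(A\cap B))$.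
   Context: $\mathcal{P}(\kappa)$ is the power set of $\kappa$; $\mathrm{Sub}(V)$ is the lattice of subspaces of $V$. *)

From HB Require Import structures.
From mathcomp Require Import all_boot all_algebra.
From mathcomp Require Import boolp classical_sets.
Set Implicit Arguments. Unset Strict Implicit. Unset Printing Implicit Defensive.
Import GRing.Theory.
Local Open Scope ring_scope.
Local Open Scope classical_set_scope.

Definition lspan (F : fieldType) (V : lmodType F) (S : set V) : set V :=
  [set v | exists (n : nat) (c : 'I_n -> F) (s : 'I_n -> V),
             (forall i, S (s i)) /\ v = \sum_(i < n) c i *: s i].

Definition subsum (F : fieldType) (V : lmodType F) (U W : set V) : set V :=
  [set v | exists u w, U u /\ W w /\ v = u + w].

(* V is the F-vector space presented by generators x_a, y_a, z_a (a in K)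
   and relations x_a + y_a + z_a = 0: the relations hold, the generators
   span V, and (V, x, y, z) has the universal property of the presentation. *)
Definition presented_xyz (F : fieldType) (V : lmodType F) (K : Type)
    (x y z : K -> V) : Prop :=
  [/\ (forall a, x a + y a + z a = 0),
      (forall v, lspan (range x `|` range y `|` range z) v) &
      (forall (W : lmodType F) (x' y' z' : K -> W),
         (forall a, x' a + y' a + z' a = 0) ->
         exists f : {linear V -> W},
           forall a, [/\ f (x a) = x' a, f (y a) = y' a & f (z a) = z' a])].

Definition Fmap (F : fieldType) (V : lmodType F) (K : Type) (x y z : K -> V)
    (A B C : set K) : set V :=
  subsum (subsum (lspan (x @` A)) (lspan (y @` B))) (lspan (z @` C)).

Definition Gmap (F : fieldType) (V : lmodType F) (K : Type) (x y z : K -> V)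
    (W : set V) : set K * set K * set K :=
  ([set a | W (x a)], [set b | W (y b)], [set c | W (z c)]).

From HB Require Import structures.
From mathcomp Require Import all_boot all_algebra.
From mathcomp Require Import boolp classical_sets.
Set Implicit Arguments. Unset Strict Implicit. Unset Printing Implicit Defensive.
Local Open Scope ring_scope.
Local Open Scope classical_set_scope.
Import GRing.Theory.

(* The inclusion from right to left is clear: x_a = -y_a - z_a lies in
   F(A,B,C) as soon as a is in B and C.  Conversely, if x_a lies in F(A,B,C)
   but a is neither in A nor in B, the presentation yields a linear
   functional taking the values 1, -1, 0 on x_a, y_a, z_a and vanishing on
   all other generators; it kills every generator of F(A,B,C) but not x_a.
   The other cases follow from the symmetry of the data under permuting
   (x,A), (y,B) and (z,C). *)

Section Span.
Variables (F : fieldType) (V : lmodType F).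
Implicit Types (S U W : set V) (u v w : V).

Lemma lspan_sub S : S `<=` lspan S.
Proof.
move=> v Sv; exists 1%N, (fun _ => 1), (fun _ => v); split => //.
by rewrite big_ord1 scale1r.
Qed.

Lemma lspan0 S : lspan S 0.
Proof.
by exists 0%N, (fun _ => 0), (fun _ => 0); split; [case | rewrite big_ord0].
Qed.

Lemma lspanN S v : lspan S v -> lspan S (- v).
Proof.
move=> [n [c [s [Ss ->]]]]; exists n, (fun i => - c i), s; split => //.
by rewrite -sumrN; apply: eq_bigr => i _; rewrite scaleNr.
Qed.

Lemma lspan_linear_eq0 (Y : lmodType F) (f : {linear V -> Y}) S :
  (forall v, S v -> f v = 0) -> forall v, lspan S v -> f v = 0.
Proof.
move=> fS v [n [c [s [Ss ->]]]].
by rewrite linear_sum big1 // => i _; rewrite linearZ /= fS // scaler0.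
Qed.

Lemma subsum_add U W u w : U u -> W w -> subsum U W (u + w).
Proof. by move=> Uu Ww; exists u, w. Qed.

Lemma subsumC U W : subsum U W = subsum W U.
Proof.
by apply/seteqP; split=> _ [u [w [Uu [Ww ->]]]]; exists w, u; rewrite addrC.
Qed.

Lemma subsumAC U W (T : set V) :
  subsum (subsum U W) T = subsum (subsum U T) W.
Proof.
by apply/seteqP; split=> _ [_ [t [[u [w [Uu [Ww ->]]]] [Tt ->]]]];
  exists (u + t), w; rewrite addrAC; do !split => //; exact: subsum_add.
Qed.

Lemma subsum_linear_eq0 (Y : lmodType F) (f : {linear V -> Y}) U W :
  (forall u, U u -> f u = 0) -> (forall w, W w -> f w = 0) ->
  forall v, subsum U W v -> f v = 0.
Proof.
by move=> fU fW _ [u [w [Uu [Ww ->]]]]; rewrite linearD fU ?fW ?addr0.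
Qed.

End Span.

Section Presentation.
Variables (K : Type) (F : fieldType) (V : lmodType F).
Implicit Types (x y z : K -> V) (A B C : set K).

Lemma presented_xyz_swap12 x y z :
  presented_xyz x y z -> presented_xyz y x z.
Proof.
case=> rel span univ; split.
- by move=> a; rewrite (addrC (y a)).
- by rewrite (setUC (range y)).
- move=> W x' y' z' rel'; have [|f fxyz] := univ W y' x' z'.
    by move=> a; rewrite (addrC (y' a)).
  by exists f => a; have [-> -> ->] := fxyz a.
Qed.

Lemma presented_xyz_swap23 x y z :
  presented_xyz x y z -> presented_xyz x z y.
Proof.
case=> rel span univ; split.
- by move=> a; rewrite addrAC.
- by rewrite setUAC.
- move=> W x' y' z' rel'; have [|f fxyz] := univ W x' z' y'.
    by move=> a; rewrite addrAC.
  by exists f => a; have [-> -> ->] := fxyz a.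
Qed.

Lemma Fmap_swap12 x y z A B C : Fmap x y z A B C = Fmap y x z B A C.
Proof. by rewrite /Fmap (subsumC (lspan (x @` A))). Qed.

Lemma Fmap_swap23 x y z A B C : Fmap x y z A B C = Fmap x z y A C B.
Proof. by rewrite /Fmap subsumAC. Qed.

Lemma Fmap_add x y z A B C u1 u2 u3 :
  lspan (x @` A) u1 -> lspan (y @` B) u2 -> lspan (z @` C) u3 ->
  Fmap x y z A B C (u1 + u2 + u3).
Proof. by move=> *; do 2 apply: subsum_add => //. Qed.

Lemma Fmap_linear_eq0 x y z A B C (f : {linear V -> F^o}) :
  (forall a, A a -> f (x a) = 0) -> (forall a, B a -> f (y a) = 0) ->
  (forall a, C a -> f (z a) = 0) ->
  forall v, Fmap x y z A B C v -> f v = 0.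
Proof.
move=> fA fB fC; have gen_eq0 D (g : K -> V) : (forall a, D a -> f (g a) = 0) ->
    forall v, lspan (g @` D) v -> f v = 0.
  by move=> fD; apply: lspan_linear_eq0 => _ [a Da <-]; exact: fD.
by apply: subsum_linear_eq0; first apply: subsum_linear_eq0; apply: gen_eq0.
Qed.

Lemma presented_xyz_dual_point x y z (a : K) (s1 s2 s3 : F) :
  presented_xyz x y z -> s1 + s2 + s3 = 0 ->
  exists f : {linear V -> F^o},
    [/\ f (x a) = s1, f (y a) = s2 & f (z a) = s3] /\
    forall b, b <> a -> [/\ f (x b) = 0, f (y b) = 0 & f (z b) = 0].
Proof.
case=> _ _ univ s0; pose delta b : F := (`[< b = a >])%:R.
have [|f fxyz] := univ F^o (fun b => s1 * delta b) (fun b => s2 * delta b)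
                         (fun b => s3 * delta b).
  by move=> b; rewrite -!mulrDl s0 mul0r.
exists f; split.
  by have [-> -> ->] := fxyz a; rewrite /delta asboolT ?mulr1.
by move=> b nba; have [-> -> ->] := fxyz b; rewrite /delta asboolF ?mulr0.
Qed.

Lemma Fmap_x_notin_B x y z A B C a :
  presented_xyz x y z -> Fmap x y z A B C (x a) -> ~ A a -> B a.
Proof.
move=> hV Fxa nAa; apply: contrapT => nBa.
have [|f [[fxa _ fza] f_off]] := @presented_xyz_dual_point x y z a 1 (-1) 0 hV.
  by rewrite addrN addr0.
have neq_a D b : ~ D a -> D b -> b <> a.
  by move=> nDa Db eba; apply: nDa; rewrite -eba.
suff : f (x a) = 0 by rewrite fxa; apply/eqP; exact: oner_neq0.
apply: Fmap_linear_eq0 Fxa.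
- by move=> b /(neq_a _ _ nAa) /f_off [].
- by move=> b /(neq_a _ _ nBa) /f_off [].
- by move=> b _; have [->|/f_off []] := pselect (b = a).
Qed.

Lemma Fmap_x x y z A B C a : presented_xyz x y z ->
  Fmap x y z A B C (x a) <-> A a \/ B a /\ C a.
Proof.
move=> hV; split=> [Fxa|[Aa|[Ba Ca]]].
- have [|nAa] := pselect (A a); [by left | right].
  split; first exact: Fmap_x_notin_B Fxa nAa.
  apply: (@Fmap_x_notin_B x z y A C B a (presented_xyz_swap23 hV) _ nAa).
  by rewrite -Fmap_swap23.
- rewrite -[x a]addr0 -[_ + 0]addr0.
  by apply: Fmap_add (lspan0 _) (lspan0 _); apply: lspan_sub; exists a.
- have [rel _ _] := hV.
  have -> : x a = 0 + - y a + - z a.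
    by apply/eqP; rewrite add0r -opprD -addr_eq0 addrA rel.
  by apply: (Fmap_add (lspan0 _)); apply/lspanN/lspan_sub; exists a.
Qed.

End Presentation.

Theorem lemma6p2 (K : Type) (F : fieldType) (V : lmodType F) (x y z : K -> V)
    (hV : presented_xyz x y z) (A B C : set K) :
  Gmap x y z (Fmap x y z A B C) =
    (A `|` (B `&` C), B `|` (A `&` C), C `|` (A `&` B)).
Proof.
have hVy := presented_xyz_swap12 hV.
have hVz := presented_xyz_swap12 (presented_xyz_swap23 hV).
rewrite /Gmap; congr (_, _, _); apply/seteqP; split=> a /=.
1,2: by move/(Fmap_x _ _ _ _ hV).
1,2: by rewrite Fmap_swap12 => /(Fmap_x _ _ _ _ hVy).
1,2: by rewrite Fmap_swap23 Fmap_swap12 => /(Fmap_x _ _ _ _ hVz).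
Qed.
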